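(* Let $n\geq 2$ and let $\mathcal{G}=(\mathcal{V},\mathcal{E})$ be a directed graph on $\mathcal{V}=\{1,\ldots,n\}$ in which every node has at least one outgoing edge, with hyperlink matrix $A$, let $m\in(0,1)$, and let $x^*$ be the PageRank vector. Let $p_1,\ldots,p_n>0$ with $\sum_{i=1}^n p_i=1$. Consider the following randomized algorithm. Initially $x_i(0)=z_i(0)=m/n$ for all $i\in\mathcal{V}$. At each time $k\geq 0$, a page $\theta(k)\in\mathcal{V}$ is selected, the sequence $\{\theta(k)\}$ being i.i.d. with $\mathrm{Prob}\{\theta(k)=i\}=p_i$ for every $i\in\mathcal{V}$, and each page $i\in\mathcal{V}$ updates $$x_i(k+1)=\begin{cases}x_i(k)+\frac{1-m}{n_{\theta(k)}}z_{\theta(k)}(k)&\text{if } i\in\mathcal{L}^{\text{out}}_{\theta(k)},\\ x_i(k)&\text{otherwise,}\end{cases}$$ $$z_i(k+1)=\begin{cases}0&\text{if } i=\theta(k),\\ z_i(k)+\frac{1-m}{n_{\theta(k)}}z_{\theta(k)}(k)&\text{if } i\in\mathcal{L}^{\text{out}}_{\theta(k)},\\ z_i(k)&\text{otherwise.}\end{cases}$$ Then $x(k)\to x^*$ as $k\to\infty$ with probability $1$.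
   Context: Write $(i,j)\in\mathcal{E}$ if page $i$ has a link to page $j$. $\mathcal{L}_j^{\text{out}}=\{i:(j,i)\in\mathcal{E}\}$ and $n_j=|\mathcal{L}_j^{\text{out}}|\geq 1$. The hyperlink matrix $A=(a_{ij})$ is defined by $a_{ij}=1/n_j$ if $i\in\mathcal{L}_j^{\text{out}}$ and $a_{ij}=0$ otherwise (column stochastic). The PageRank vector $x^*$ satisfies $x^*=(1-m)Ax^*+\frac{m}{n}\mathbf{1}_n$ and $\mathbf{1}_n^Tx^*=1$. Here $x(k)=(x_1(k),\ldots,x_n(k))^T$. *)

From HB Require Import structures.
From mathcomp Require Import all_boot all_order all_algebra.
From mathcomp Require Import all_classical all_reals all_analysis.
Set Implicit Arguments. Unset Strict Implicit. Unset Printing Implicit Defensive.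
Import Order.TTheory GRing.Theory Num.Theory.
Local Open Scope ring_scope.

(* Graph on 'I_n given by an edge relation: E j i means page j links to page i. *)
Definition outdeg (n : nat) (E : rel 'I_n) (j : 'I_n) : nat := #|[set i | E j i]|.

Definition hyperlink (R : fieldType) (n : nat) (E : rel 'I_n) : 'M[R]_n :=
  \matrix_(i, j) (if E j i then ((outdeg E j)%:R)^-1 else 0).

Definition pr_step (R : fieldType) (n : nat) (E : rel 'I_n) (m : R) (th : 'I_n)
  (s : ('I_n -> R) * ('I_n -> R)) : ('I_n -> R) * ('I_n -> R) :=
  let x := s.1 in let z := s.2 in
  let c := (1 - m) / (outdeg E th)%:R * z th in
  (fun i => if E th i then x i + c else x i,
   fun i => if i == th then 0 else if E th i then z i + c else z i).

Fixpoint pr_state (R : fieldType) (n : nat) (E : rel 'I_n) (m : R)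
  (th : nat -> 'I_n) (k : nat) : ('I_n -> R) * ('I_n -> R) :=
  match k with
  | 0 => (fun _ => m / n%:R, fun _ => m / n%:R)
  | k'.+1 => pr_step E m (th k') (pr_state E m th k')
  end.

From HB Require Import structures.
From mathcomp Require Import all_boot all_order all_algebra.
From mathcomp Require Import all_classical all_reals all_analysis.
From mathcomp Require Import zify ring lra.
Import Order.TTheory GRing.Theory Num.Theory numFieldNormedType.Exports.
Local Open Scope classical_set_scope.
Local Open Scope ring_scope.
Set Implicit Arguments. Unset Strict Implicit. Unset Printing Implicit Defensive.

(* Let S(k) = sum_i z_i(k) be the residual mass. Selecting page j hands (1-m) z_j(k)
   to its out-neighbours and deletes z_j(k), so S(k+1) = S(k) - m z_j(k), and by
   induction x(k) = (m/n) 1 + (1-m) A (x(k) - z(k)). Subtracting the PageRank equation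
   and using that A is column stochastic gives m |x_i(k) - x*_i| <= S(k).
   A sweep is a block of n consecutive steps selecting pages 1, ..., n in this order;
   no z_i decreases before page i is selected, so a sweep multiplies S by at most
   1 - m. The sweeps starting at the times Jn, (J+1)n, ... are independent events of
   probability p_1 ... p_n > 0, so almost surely infinitely many of them occur, hence
   S(k) -> 0 and x(k) -> x*. *)

Lemma sumr_out_const (R : pzSemiRingType) n (E : rel 'I_n) j (c : R) :
  \sum_(i < n) (if E j i then c else 0) = (outdeg E j)%:R * c.
Proof.
rewrite -big_mkcond /= (eq_bigl (fun i => i \in [set i | E j i]%SET)); last first.
  by move=> i; rewrite inE.
by rewrite sumr_const mulr_natl.
Qed.

Section Hyperlink.
Variables (R : numFieldType) (n : nat) (E : rel 'I_n).

Lemma hyperlinkE i j :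
  hyperlink R E i j = if E j i then ((outdeg E j)%:R)^-1 else 0.
Proof. by rewrite mxE. Qed.

Lemma hyperlink_ge0 i j : 0 <= hyperlink R E i j.
Proof. by rewrite hyperlinkE; case: ifP => // _; rewrite invr_ge0 ler0n. Qed.

Lemma hyperlink_col_sum j : (0 < outdeg E j)%N -> \sum_i hyperlink R E i j = 1.
Proof.
by move=> dj; rewrite (eq_bigr _ (fun i _ => hyperlinkE i j)) sumr_out_const mulfV ?pnatr_eq0 -?lt0n.
Qed.

End Hyperlink.

Lemma l1_fixpoint_bound (R : realFieldType) n (A : 'M[R]_n) (c : R) (e z : 'I_n -> R) :
  (forall i j, 0 <= A i j) -> (forall j, \sum_i A i j = 1) -> 0 <= c ->
  (forall i, e i = c * \sum_j A i j * (e j - z j)) ->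
  (1 - c) * \sum_i `|e i| <= c * \sum_i `|z i|.
Proof.
move=> A_ge0 A_col c_ge0 e_fix.
have contract : \sum_i `|e i| <= c * \sum_j `|e j - z j|.
  have -> : \sum_j `|e j - z j| = \sum_i \sum_j A i j * `|e j - z j|.
    by rewrite exchange_big; apply: eq_bigr => j _; rewrite -mulr_suml A_col mul1r.
  rewrite mulr_sumr; apply: ler_sum => i _.
  rewrite e_fix normrM ger0_norm //; apply: ler_wpM2l => //.
  apply: (le_trans (ler_norm_sum _ _ _)); apply: ler_sum => j _.
  by rewrite normrM ger0_norm.
have triangle : \sum_j `|e j - z j| <= \sum_j `|e j| + \sum_j `|z j|.
  by rewrite -big_split; apply: ler_sum => j _; apply: ler_normB.
have := ler_wpM2l c_ge0 triangle; lra.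
Qed.

Definition sweep n t (f : nat -> 'I_n) := forall i : 'I_n, f (t + i)%N = i.

Section PageRankIteration.
Variables (R : realType) (n : nat) (E : rel 'I_n) (m : R) (th : nat -> 'I_n).
Hypothesis E_irrefl : forall i, ~~ E i i.
Hypothesis outdeg_gt0 : forall j, (0 < outdeg E j)%N.
Hypotheses (m_gt0 : 0 < m) (m_lt1 : m < 1).

Let x k := (pr_state E m th k).1.
Let z k := (pr_state E m th k).2.
Let mass k := \sum_i z k i.

Let subr1m_ge0 : 0 <= 1 - m. Proof. by rewrite subr_ge0 ltW. Qed.

Let weight_ge0 j : 0 <= (1 - m) / (outdeg E j)%:R.
Proof. exact: divr_ge0. Qed.

Lemma pr_state_z_ge0 k i : 0 <= z k i.
Proof.
elim: k i => [|k IH] i; first by apply: divr_ge0; [exact: ltW|exact: ler0n].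
rewrite /z /= /pr_step /=; case: eqP => _ //; case: ifP => _; last exact: IH.
by apply: addr_ge0; [exact: IH|apply: mulr_ge0; [exact: weight_ge0|exact: IH]].
Qed.

Lemma pr_state_z_le_succ k i : i != th k -> z k i <= z k.+1 i.
Proof.
move=> i_unselected; rewrite /z /= /pr_step /= (negbTE i_unselected).
by case: ifP => _ //; rewrite lerDl mulr_ge0 ?pr_state_z_ge0.
Qed.

Lemma pr_state_mass_succ k : mass k.+1 = mass k - m * z k (th k).
Proof.
rewrite /mass /z /= /pr_step /=.
set zk := (pr_state E m th k).2; set t := th k.
set c := (1 - m) / (outdeg E t)%:R * zk t.
have split_z i : (if i == t then 0 else if E t i then zk i + c else zk i) =
    zk i + (if E t i then c else 0) - (if i == t then zk i else 0).
  case: eqP => [->|_]; first by rewrite (negbTE (E_irrefl t)); ring.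
  by case: ifP => _; ring.
rewrite (eq_bigr _ (fun i _ => split_z i)) sumrB big_split /= sumr_out_const.
rewrite -big_mkcond big_pred1_eq /c.
have : (outdeg E t)%:R != 0 :> R by rewrite pnatr_eq0 -lt0n.
by move=> ?; field.
Qed.

Lemma pr_state_mass_nonincreasing : nonincreasing_seq mass.
Proof.
apply/nonincreasing_seqP => k; rewrite pr_state_mass_succ gerBl.
by apply: mulr_ge0; [exact: ltW|exact: pr_state_z_ge0].
Qed.

Lemma pr_state_z_le_unselected t i j :
  (forall l, (l < j)%N -> th (t + l)%N != i) -> z t i <= z (t + j)%N i.
Proof.
elim: j => [|j IH] unselected; first by rewrite addn0.
apply: (le_trans (IH (fun l lj => unselected l (ltnW lj)))).
by rewrite addnS; apply: pr_state_z_le_succ; rewrite eq_sym unselected.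
Qed.

Lemma pr_state_mass_sweep t : sweep t th -> mass (t + n)%N <= (1 - m) * mass t.
Proof.
move=> th_sweep.
have partial j : (j <= n)%N ->
    mass (t + j)%N <= mass t - m * \sum_(i < n | (i < j)%N) z t i.
  elim: j => [|j IH] jn; first by rewrite addn0 big_pred0 // mulr0 subr0.
  pose o := Ordinal jn.
  have th_o : th (t + j)%N = o := th_sweep o.
  (* page j is selected at time t + j, and not since time t *)
  have z_o : z t o <= z (t + j)%N o.
    apply: pr_state_z_le_unselected => l lj.
    have ln : (l < n)%N by apply: ltn_trans lj jn.
    by rewrite (th_sweep (Ordinal ln)) -val_eqE /= neq_ltn lj.
  rewrite addnS pr_state_mass_succ th_o (bigD1 o) //=.
  rewrite (eq_bigl (fun i : 'I_n => (i < j)%N)); last first.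
    by move=> i; rewrite -val_eqE /= ltnS ltn_neqAle andbC.
  have mass_tj := IH (ltnW jn); have m_z_o := ler_wpM2l (ltW m_gt0) z_o.
  rewrite mulrDr; lra.
have := partial n (leqnn n).
by rewrite (eq_bigl xpredT) => [|i]; rewrite ?ltn_ord // mulrBl mul1r.
Qed.

Let mass_ge0 k : 0 <= mass k.
Proof. by apply: sumr_ge0 => i _; apply: pr_state_z_ge0. Qed.

Lemma pr_state_x_eq k i :
  x k i = m / n%:R + (1 - m) * \sum_j hyperlink R E i j * (x k j - z k j).
Proof.
elim: k i => [|k IH] i.
  by rewrite big1 ?mulr0 ?addr0 // => j _; rewrite subrr mulr0.
have IHi := IH i; rewrite /x /z /= /pr_step /= in IHi *.
set xk := (pr_state E m th k).1 in IHi *; set zk := (pr_state E m th k).2 in IHi *.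
set t := th k; set c := (1 - m) / (outdeg E t)%:R * zk t.
have shift j : (if E t j then xk j + c else xk j) -
    (if j == t then 0 else if E t j then zk j + c else zk j) =
    (xk j - zk j) + (if j == t then zk t else 0).
  case: eqP => [->|_]; first by rewrite (negbTE (E_irrefl t)); ring.
  by case: ifP => _; ring.
under eq_bigr => j _ do rewrite shift mulrDr.
have selected : \sum_j hyperlink R E i j * (if j == t then zk t else 0) =
    hyperlink R E i t * zk t.
  by rewrite (bigD1 t) //= eqxx big1 ?addr0 // => j /negbTE ->; rewrite mulr0.
rewrite big_split /= selected hyperlinkE /c.
by case: ifP => _; rewrite IHi; ring.
Qed.

Variable xstar : 'cV[R]_n.
Hypothesis xstar_fix :
  xstar = (1 - m) *: (hyperlink R E *m xstar) + const_mx (m / n%:R).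

Let xstar_eq i :
  xstar i 0 = m / n%:R + (1 - m) * \sum_j hyperlink R E i j * xstar j 0.
Proof. by rewrite {1}xstar_fix !mxE addrC. Qed.

Lemma pr_state_x_err k i : m * `|x k i - xstar i 0| <= mass k.
Proof.
pose e j := x k j - xstar j 0.
have e_fix j : e j = (1 - m) * \sum_l hyperlink R E j l * (e l - z k l).
  have -> : \sum_l hyperlink R E j l * (e l - z k l) =
      \sum_l hyperlink R E j l * (x k l - z k l) - \sum_l hyperlink R E j l * xstar l 0.
    by rewrite -sumrB; apply: eq_bigr => l _; rewrite /e; ring.
  by rewrite /e pr_state_x_eq xstar_eq; ring.
have := l1_fixpoint_bound (@hyperlink_ge0 R n E) (fun j => hyperlink_col_sum R (outdeg_gt0 j))
  subr1m_ge0 e_fix.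
have norm_z : \sum_j `|z k j| = mass k.
  by apply: eq_bigr => j _; rewrite ger0_norm ?pr_state_z_ge0.
rewrite opprB addrC subrK norm_z => l1_bound.
have e_i_le : `|e i| <= \sum_j `|e j| by rewrite (bigD1 i) //= lerDl sumr_ge0.
have := ler_wpM2l (ltW m_gt0) e_i_le.
have := mulr_ge0 (ltW m_gt0) (mass_ge0 k).
rewrite -/(e i); lra.
Qed.

Section Sweeps.
Hypothesis sweeps : forall J, exists t, (J <= t)%N /\ sweep t th.

Lemma pr_state_mass_geometric N : exists K, mass K <= (1 - m) ^+ N * mass 0.
Proof.
elim: N => [|N [K IH]]; first by exists 0%N; rewrite expr0 mul1r.
have [t [Kt t_sweep]] := sweeps K.
exists (t + n)%N; rewrite exprS -mulrA.
apply: (le_trans (pr_state_mass_sweep t_sweep)); apply: ler_wpM2l => //.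
exact: le_trans (pr_state_mass_nonincreasing Kt) IH.
Qed.

Lemma pr_state_mass_cvg0 : mass @ \oo --> 0.
Proof.
have geometric_cvg0 : (fun N => (1 - m) ^+ N * mass 0) @ \oo --> 0.
  rewrite -(mul0r (mass 0)); apply: cvgM; last exact: cvg_cst.
  by apply: cvg_expr; rewrite ger0_norm // gtrBl.
apply/cvgrPdist_le => e e_gt0.
have [N _ geo_N] := (cvgrPdist_le _ _).1 geometric_cvg0 e e_gt0.
have [K mass_K] := pr_state_mass_geometric N.
exists K => // k /= Kk; rewrite sub0r normrN ger0_norm //.
apply: le_trans (pr_state_mass_nonincreasing Kk) (le_trans mass_K _).
have := geo_N N (leqnn N); rewrite /= sub0r normrN ger0_norm //.
by apply: mulr_ge0; [apply: exprn_ge0|].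
Qed.

Lemma pr_state_x_cvg i : (fun k => x k i) @ \oo --> xstar i 0.
Proof.
apply/cvgrPdist_le => e e_gt0.
move/cvgrPdist_le : pr_state_mass_cvg0 => /(_ (e * m) (mulr_gt0 e_gt0 m_gt0)).
apply: filterS => k; rewrite sub0r normrN ger0_norm // => mass_k.
rewrite distrC -(ler_pM2r m_gt0) mulrC.
exact: le_trans (pr_state_x_err k i) mass_k.
Qed.

End Sweeps.

End PageRankIteration.

Definition prefix_determined n t (Q : (nat -> 'I_n) -> Prop) :=
  forall f g, (forall k, (k < t)%N -> f k = g k) -> Q f -> Q g.

Definition override n (f : nat -> 'I_n) t i : nat -> 'I_n :=
  fun k => if k == t then i else f k.

Lemma prefix_determined_override n t (Q : (nat -> 'I_n) -> Prop) i :
  prefix_determined t.+1 Q -> prefix_determined t (fun f => Q (override f t i)).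
Proof.
move=> Q_det f g fg; apply: Q_det => k kt; rewrite /override.
by case: eqP => // /eqP k_neq_t; apply: fg; rewrite ltn_neqAle k_neq_t -ltnS.
Qed.

Section PathEvents.
Variables (T : Type) (n : nat) (theta : nat -> T -> 'I_n).

Definition cylinder s f : set T :=
  \big[setI/setT]_(k <- s) [set w | theta k w = f k].

Definition path_event (Q : (nat -> 'I_n) -> Prop) : set T := [set w | Q (theta^~ w)].

Lemma cylinderP s f w : cylinder s f w <-> forall k, k \in s -> theta k w = f k.
Proof. by rewrite /cylinder -bigcap_seq. Qed.

Lemma cylinder_nil f : cylinder [::] f = setT.
Proof. by rewrite /cylinder big_nil. Qed.

Lemma path_event_prefix0 Q :
  prefix_determined 0 Q -> path_event Q = setT \/ path_event Q = set0.
Proof.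
move=> Q_det.
case: (pselect (exists f, Q f)) => [[f Qf]|noQ]; [left|right].
  by apply/seteqP; split => // w _; apply: Q_det Qf.
by apply/seteqP; split => // w Qw; apply: noQ; exists (theta^~ w).
Qed.

Lemma path_event_split t Q s f : prefix_determined t.+1 Q -> t \notin s ->
  path_event Q `&` cylinder s f =
  \big[setU/set0]_(i < n)
    (path_event (fun g => Q (override g t i)) `&` cylinder (t :: s) (override f t i)).
Proof.
move=> Q_det ts; rewrite -bigcup_seq; apply/seteqP; split => w.
- case=> Qw /cylinderP w_s; exists (theta t w); first exact: mem_index_enum.
  split.
    by apply: Q_det Qw => k _; rewrite /override; case: eqP => [->|].
  apply/cylinderP => k; rewrite inE /override.
  case: eqP => [->|_] //= ks; exact: w_s.
- move=> [i _ [Qi /cylinderP w_ts]].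
  have theta_t : theta t w = i by rewrite w_ts ?mem_head // /override eqxx.
  split.
    by apply: Q_det Qi => k _; rewrite /override; case: eqP => [->|].
  apply/cylinderP => k ks; rewrite w_ts ?inE ?ks ?orbT // /override.
  by case: eqP => // kt; rewrite -kt ks in ts.
Qed.

End PathEvents.

Definition no_sweep_block n J N (f : nat -> 'I_n) :=
  forall k, (k < N)%N -> ~ sweep ((J + k) * n)%N f.

Definition never_sweep_from n J (f : nat -> 'I_n) := forall k, ~ sweep ((J + k) * n)%N f.

Lemma prefix_determined_no_sweep n J N :
  prefix_determined ((J + N) * n)%N (@no_sweep_block n J N).
Proof.
move=> f g fg f_no_sweep k kN g_sweep; apply: (f_no_sweep k kN) => i.
by rewrite fg ?g_sweep //; have := ltn_ord i; nia.
Qed.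

Section Independence.
Variables (R : realType) (d : measure_display) (T : measurableType d).
Variables (P : probability T R) (n : nat) (theta : nat -> T -> 'I_n).
Variables (p : 'I_n -> R) (i0 : 'I_n).
Hypothesis theta_measurable : forall k (i : 'I_n), measurable (theta k @^-1` [set i]).
Hypothesis theta_iid : forall s f, uniq s ->
  P (cylinder theta s f) = (\prod_(k <- s) p (f k))%:E.

Lemma cylinder_measurable s f : measurable (cylinder theta s f).
Proof. by apply: bigsetI_measurable => k _; apply: theta_measurable. Qed.

Let p_ge0 i : 0 <= p i.
Proof.
have := theta_iid (fun=> i) (isT : uniq [:: 0%N]).
by rewrite big_seq1 -lee_fin => <-; apply: measure_ge0.
Qed.

Lemma path_event_measurable t Q :
  prefix_determined t Q -> measurable (path_event theta Q).
Proof.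
elim: t Q => [|t IH] Q Q_det.
  by case: (path_event_prefix0 theta Q_det) => ->; [exact: measurableT|exact: measurable0].
rewrite -[path_event theta Q]setIT -(cylinder_nil theta (fun=> i0)).
rewrite (path_event_split _ _ Q_det) //.
apply: bigsetU_measurable => i _; apply: measurableI; last exact: cylinder_measurable.
exact: IH (prefix_determined_override (i:=i) Q_det).
Qed.

Lemma path_event_cylinder_indep t Q s f :
  prefix_determined t Q -> uniq s -> all (leq t) s ->
  P (path_event theta Q `&` cylinder theta s f) =
  (P (path_event theta Q) * (\prod_(k <- s) p (f k))%:E)%E.
Proof.
elim: t Q s f => [|t IH] Q s f Q_det s_uniq s_ge.
  case: (path_event_prefix0 theta Q_det) => ->.
    by rewrite setTI probability_setT mul1e theta_iid.
  by rewrite set0I measure0 mul0e.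
pose Q_ i g := Q (override g t i).
have Q_i_det i : prefix_determined t (Q_ i) := prefix_determined_override (i:=i) Q_det.
have condition_on_t s' f' : uniq s' -> all (leq t.+1) s' ->
    P (path_event theta Q `&` cylinder theta s' f') =
    (\sum_(i < n) P (path_event theta (Q_ i)) * (p i * \prod_(k <- s') p (f' k))%:E)%E.
  move=> s'_uniq s'_gt.
  have ts' : t \notin s' by apply/negP => /(allP s'_gt); rewrite ltnn.
  rewrite (path_event_split _ f' Q_det ts') measure_bigsetU_ord; first last.
  - move=> i j _ _ [w [[_ /cylinderP w_i] [_ /cylinderP w_j]]].
    by move: (w_i t) (w_j t); rewrite mem_head /override eqxx => <- // <-.
  - move=> i; apply: measurableI; last exact: cylinder_measurable.
    exact: path_event_measurable (Q_i_det i).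
  have s'_ge : all (leq t) s' by apply: sub_all s'_gt => k /ltnW.
  apply: eq_bigr => i _ /=; rewrite (IH _ _ _ (Q_i_det i)) /= ?ts' ?s'_uniq ?leqnn //.
  rewrite big_cons /override eqxx; congr (_ * (_ * _)%:E)%E.
  by apply: eq_big_seq => k ks; case: eqP => // kt; rewrite -kt ks in ts'.
have P_Q : P (path_event theta Q) =
    (\sum_(i < n) P (path_event theta (Q_ i)) * (p i)%:E)%E.
  rewrite -[path_event theta Q]setIT -(cylinder_nil theta (fun=> i0)).
  by rewrite condition_on_t //; apply: eq_bigr => i _; rewrite big_nil mulr1.
rewrite condition_on_t // P_Q ge0_sume_distrl => [|i _]; last first.
  by apply: mule_ge0; rewrite ?lee_fin.
by apply: eq_bigr => i _; rewrite EFinM muleA.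
Qed.

Definition sweep_seq t : nat -> 'I_n := fun k => insubd i0 (k - t)%N.

Lemma path_event_sweep t :
  path_event theta (sweep t) = cylinder theta (iota t n) (sweep_seq t).
Proof.
apply/seteqP; split => w.
- move=> w_sweep; apply/cylinderP => k; rewrite mem_iota => /andP [tk ktn].
  have ktn' : (k - t < n)%N by lia.
  have := w_sweep (Ordinal ktn'); rewrite /= subnKC // => ->.
  by apply: val_inj; rewrite /= val_insubd ktn'.
- move/cylinderP => w_cyl i; rewrite w_cyl; last by rewrite mem_iota leq_addr ltn_add2l /=.
  by apply: val_inj; rewrite /sweep_seq addKn val_insubd ltn_ord.
Qed.

Lemma sweep_measurable t : measurable (path_event theta (sweep t)).
Proof. by rewrite path_event_sweep; apply: cylinder_measurable. Qed.

Lemma prod_sweep_seq t : \prod_(k <- iota t n) p (sweep_seq t k) = \prod_i p i.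
Proof.
have -> : iota t n = map (addn t) (index_iota 0 n).
  by rewrite /index_iota subn0 -iotaDl addn0.
rewrite big_map big_mkord; apply: eq_bigr => i _; congr p.
by apply: val_inj; rewrite /sweep_seq addKn val_insubd ltn_ord.
Qed.

Lemma prob_no_sweep_block J N :
  P (path_event theta (no_sweep_block J N)) = ((1 - \prod_i p i) ^+ N)%:E.
Proof.
elim: N => [|N IH].
  have -> : path_event theta (no_sweep_block J 0) = setT.
    by apply/seteqP; split => // w _ k; rewrite ltn0.
  by rewrite probability_setT expr0.
set t := ((J + N) * n)%N.
have no_sweep_det := @prefix_determined_no_sweep n J N.
have no_sweep_succ : path_event theta (no_sweep_block J N.+1) =
    path_event theta (no_sweep_block J N) `\` path_event theta (sweep t).
  apply/seteqP; split => w.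
  - by move=> no_sweep; split => [k kN|]; apply: no_sweep; [apply: ltnW|].
  - move=> [no_sweep no_sweep_t] k; rewrite ltnS leq_eqVlt => /orP [/eqP ->|kN] //.
    exact: no_sweep.
rewrite no_sweep_succ measureD; first last.
- by apply: le_lt_trans (probability_le1 P _) _; rewrite ?ltry //;
    apply: path_event_measurable no_sweep_det.
- exact: sweep_measurable.
- exact: path_event_measurable no_sweep_det.
rewrite [in X in (_ - X)%E]path_event_sweep /=.
rewrite (path_event_cylinder_indep _ no_sweep_det) ?iota_uniq //; last first.
  by apply/allP => k; rewrite mem_iota => /andP [].
by rewrite prod_sweep_seq IH -EFinM -EFinB exprS; congr EFin; ring.
Qed.

Hypothesis p_gt0 : forall i, 0 < p i.

Lemma never_sweep_measurable J : measurable (path_event theta (never_sweep_from J)).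
Proof.
have -> : path_event theta (never_sweep_from J) =
    \bigcap_k ~` path_event theta (sweep ((J + k) * n)%N).
  apply/seteqP; split => [w never_sweep k _|w never_sweep k]; first exact: never_sweep.
  exact: never_sweep k Logic.I.
by apply: bigcapT_measurable => k; apply: measurableC; apply: sweep_measurable.
Qed.

Lemma never_sweep_null J : P (path_event theta (never_sweep_from J)) = 0%E.
Proof.
set q := \prod_i p i.
have bound N : (P (path_event theta (never_sweep_from J)) <= ((1 - q) ^+ N)%:E)%E.
  rewrite -(prob_no_sweep_block J N); apply: le_measure; rewrite ?inE.
  - exact: never_sweep_measurable.
  - exact: path_event_measurable (@prefix_determined_no_sweep n J N).
  - by move=> w never_sweep k _; apply: never_sweep.
have q_gt0 : 0 < q by apply: prodr_gt0 => i _.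
have q_le1 : 0 <= 1 - q.
  by have := le_trans (measure_ge0 P _) (bound 1%N); rewrite expr1 lee_fin.
have geometric_cvg0 : (1 - q) ^+ N @[N --> \oo] --> 0.
  by apply: cvg_expr; rewrite ger0_norm // gtrBl.
have P_fin := fin_num_measure P _ (never_sweep_measurable J).
rewrite -(fineK P_fin); congr EFin; apply/eqP.
rewrite eq_le fine_ge0 ?measure_ge0 // andbT -(cvg_lim _ geometric_cvg0) //.
apply: limr_ge; first by apply/cvg_ex; exists 0.
by apply: nearW => N; rewrite -lee_fin fineK.
Qed.

Lemma ae_sweeps : {ae P, forall w, forall J, exists t, (J <= t)%N /\ sweep t (theta^~ w)}.
Proof.
have n_gt0 : (0 < n)%N := leq_ltn_trans (leq0n i0) (ltn_ord i0).
have sweep_after J : {ae P, forall w, exists k, sweep ((J + k) * n)%N (theta^~ w)}.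
  exists (path_event theta (never_sweep_from J)).
  split; [exact: never_sweep_measurable|exact: never_sweep_null|].
  by move=> w /= no_sweep k sweep_k; apply: no_sweep; exists k.
apply: filterS (ae_foralln sweep_after) => w sweeps J.
have [k sweep_k] := sweeps J; exists ((J + k) * n)%N; split => //.
by rewrite (leq_trans (leq_addr k J)) // leq_pmulr.
Qed.

End Independence.

Theorem proposition1 (R : realType) (n : nat) (E : rel 'I_n) (m : R)
  (xstar : 'cV[R]_n) (p : 'I_n -> R)
  (d : measure_display) (T : measurableType d) (P : probability T R)
  (theta : nat -> T -> 'I_n) :
  (2 <= n)%N ->
  (forall i : 'I_n, ~~ E i i) ->
  (forall j : 'I_n, (1 <= outdeg E j)%N) ->
  0 < m < 1 ->
  xstar = (1 - m) *: (hyperlink R E *m xstar) + const_mx (m / n%:R) ->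
  \sum_(i < n) xstar i 0 = 1 ->
  (forall i, 0 < p i) ->
  \sum_(i < n) p i = 1 ->
  (forall k (i : 'I_n), measurable (theta k @^-1` [set i])) ->
  (* i.i.d.: for every finite set of distinct times and prescribed values,
     the joint probability is the product of the p's *)
  (forall (s : seq nat) (f : nat -> 'I_n), uniq s ->
     P (\big[setI/setT]_(k <- s) [set w | theta k w = f k]) =
     (\prod_(k <- s) p (f k))%:E) ->
  {ae P, forall w, forall i : 'I_n,
     (fun k => (pr_state E m (fun j => theta j w) k).1 i) @ \oo --> xstar i 0}.
Proof.
move=> n_ge2 E_irrefl outdeg_gt0 /andP[m_gt0 m_lt1] xstar_fix _ p_gt0 _ theta_meas theta_iid.
have i0 : 'I_n := Ordinal (leq_trans (isT : (1 <= 2)%N) n_ge2).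
apply: filterS (ae_sweeps i0 theta_meas theta_iid p_gt0) => w sweeps i.
exact: (pr_state_x_cvg E_irrefl outdeg_gt0 m_gt0 m_lt1 xstar_fix sweeps (i:=i)).
Qed.
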